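(* Let $k$ be a positive integer and let $G$ be a $2k$-connected $(P_2\cup kP_1)$-free graph. Let $u,v$ be distinct vertices of $G$, let $P$ be a longest $(u,v)$-path in $G$, oriented from $u$ to $v$, and suppose $V(P)\neq V(G)$. Let $x\in V(G)\setminus V(P)$ and write $N_P(x)=\{x_1,\dots,x_t\}$, where $x_1,\dots,x_t$ appear on $P$ in this order from $u$ to $v$. Fix $i\in\{1,\dots,t-1\}$, let $S_i$ be the set of vertices of $P$ strictly between $x_i$ and $x_{i+1}$, and let $X\subseteq N_P(x)^+$ be any set with $x_i^+\in X$ and $|X|=2k-1$. Then for every integer $j$ with $1\le j\le |S_i|$: if $j$ is odd then $N_P(x_i^{+j})\cap X=\emptyset$, and if $j$ is even then $|N_P(x_i^{+j})\cap X|\ge k+1$.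
   Context: All graphs are finite and simple. For a graph $H$, a graph $G$ is $H$-free if $G$ contains no induced subgraph isomorphic to $H$; $P_2\cup kP_1$ is the disjoint union of an edge and $k$ isolated vertices. A $(u,v)$-path is a path with endpoints $u$ and $v$. $N_P(y)$ is the set of neighbors of $y$ lying on $P$. For a vertex $w$ of the oriented path $P$, $w^{+}$ (also $w^{+1}$) is its successor and $w^{-}$ (also $w^{-1}$) its predecessor on $P$, and $w^{+\ell}$, $w^{-\ell}$ denote the successor of $w^{+(\ell-1)}$, resp. predecessor of $w^{-(\ell-1)}$. For $S\subseteq V(P)$, $S^+=\{w^+: w\in S\setminus\{v\}\}$. (Under the hypotheses, $|N_P(x)^+|\ge 2k-1$, so such $X$ exists.) *)

From mathcomp Require Import all_boot.
Set Implicit Arguments. Unset Strict Implicit. Unset Printing Implicit Defensive.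

(* A finite simple graph: vertex set a finType T, adjacency e : rel T that is
   symmetric and irreflexive (assumed as hypotheses in the theorem). *)

Section Graphs.
Variable T : finType.
Variable e : rel T.

Definition avoid_rel (S : {set T}) : rel T :=
  [rel a b | [&& e a b, a \notin S & b \notin S]].

Definition n_connected (n : nat) : Prop :=
  n < #|T| /\
  forall S : {set T}, #|S| < n ->
    forall a b, a \notin S -> b \notin S -> connect (avoid_rel S) a b.

Definition has_induced_P2_kP1 (k : nat) : Prop :=
  exists a b (I : {set T}),
    [/\ e a b, #|I| = k, a \notin I, b \notin I &
     [/\ forall y z, y \in I -> z \in I -> ~~ e y z,
         forall y, y \in I -> ~~ e a y & forall y, y \in I -> ~~ e b y]].

Definition P2_kP1_free (k : nat) : Prop := ~ has_induced_P2_kP1 k.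

Definition uv_path (u v : T) (P : seq T) : bool :=
  if P is w :: p then [&& w == u, last w p == v, uniq P & path e w p]
  else false.

Definition longest_uv_path (u v : T) (P : seq T) : Prop :=
  uv_path u v P /\ forall Q, uv_path u v Q -> size Q <= size P.

Definition NP (P : seq T) (x : T) : seq T := [seq y <- P | e x y].

Definition succn_on (P : seq T) (w : T) (j : nat) : T :=
  nth w P (index w P + j).

(* S^+ = { w^+ : w in S \ {v} } for S ⊆ V(P), v the last vertex of P *)
Definition plus_set (P : seq T) (v : T) (S : seq T) : {set T} :=
  [set succn_on P w 1 | w in [seq w <- S | w != v]].

Definition between (P : seq T) (a b : T) : {set T} :=
  [set w in P | (index a P < index w P) && (index w P < index b P)].

Definition NP_in (P : seq T) (y : T) (X : {set T}) : {set T} :=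
  [set z in X | (z \in P) && e y z].

End Graphs.

(* Write P = p_0 ... p_{n-1}.  Any rerouting of P through x that still runs
   from u to v would be a longer (u,v)-path.  This forbids x to see two
   consecutive vertices of P, makes N_P(x)^+ independent and non-adjacent to x,
   and forbids an edge p_a p_{a+1} inside S_i to have two common neighbours in
   N_P(x)^+.  So Y = X + x is an independent set of size 2k.  If a has no
   neighbour in Y other than itself and ab is an edge with b in S_i outside Y,
   then (P_2 + kP_1)-freeness lets b miss fewer than k vertices of Y, i.e. b has
   at least k+1 neighbours in X.  Starting from x_i^+ in X, this shows that the
   even successors x_i^{+j} have at least k+1 neighbours in X; an odd successor
   with a neighbour z in X would have k+1 as well (take a = z), and two
   consecutive vertices with k+1 neighbours each in the (2k-1)-set X share two
   of them, which is excluded. *)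

From mathcomp Require Import all_boot zify.
Set Implicit Arguments. Unset Strict Implicit. Unset Printing Implicit Defensive.

Lemma exists_subset_card (T : finType) (A : {set T}) m :
  m <= #|A| -> exists2 B : {set T}, B \subset A & #|B| = m.
Proof.
move=> hm; exists [set z in take m (enum A)].
  by apply/subsetP => z; rewrite inE => /mem_take; rewrite mem_enum.
by rewrite cardsE (card_uniqP _) ?take_uniq ?enum_uniq // size_takel -?cardE.
Qed.

Lemma leq_card_setI (T : finType) (A B C : {set T}) l :
  A \subset C -> B \subset C -> #|C| + l <= #|A| + #|B| -> l <= #|A :&: B|.
Proof.
move=> sAC sBC; rewrite -cardsUI.
have : #|A :|: B| <= #|C| by apply/subset_leq_card; rewrite subUset sAC.
lia.
Qed.

Lemma P2_kP1_free_nonnbs (T : finType) (e : rel T) (e_sym : symmetric e) k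
    (Y : {set T}) a b :
  P2_kP1_free e k -> {in Y &, forall y z, ~~ e y z} -> e a b -> b \notin Y ->
  {in Y, forall y, y != a -> ~~ e a y} -> #|Y :\: [set y | e b y]| < k.
Proof.
move=> Hfree Yind ab bNY aY; rewrite ltnNge; apply/negP => /exists_subset_card[I sIY cardI].
have IY y : y \in I -> y \in Y /\ ~~ e b y.
  by move/(subsetP sIY); rewrite !inE => /andP[].
apply: Hfree; exists a, b, I; split=> //.
- by apply/negP => /IY[_]; rewrite e_sym ab.
- by apply: contra bNY => /IY[].
split=> y.
- by move=> z /IY[yY _] /IY[zY _]; apply: Yind.
- move=> /IY[yY byN]; apply: aY => //; apply: contraNneq byN => ->.
  by rewrite e_sym.
- by case/IY.
Qed.

Lemma count_take_le (T : Type) (f : pred T) s m1 m2 : m1 <= m2 ->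
  count f (take m1 s) <= count f (take m2 s).
Proof. by move=> h; rewrite -(subnK h) addnC takeD count_cat leq_addr. Qed.

Lemma nth_filter_count (T : Type) (f : pred T) s y c : c < size (filter f s) ->
  exists2 m, m < size s &
    [/\ f (nth y s m), nth y (filter f s) c = nth y s m & count f (take m s) = c].
Proof.
elim: s c => [//|h s IH] c /=; case fh: (f h) => /=.
  case: c => [|c] hc; first by exists 0; rewrite ?take0.
  have [m hm [fm nth_m count_m]] := IH c hc.
  by exists m.+1; rewrite //= fh count_m.
move=> hc; have [m hm [fm nth_m count_m]] := IH c hc.
by exists m.+1; rewrite //= fh count_m.
Qed.

Lemma nth_filter_gap (T : Type) (f : pred T) s y c : c.+1 < size (filter f s) ->
  exists a b, [/\ a < b < size s, nth y (filter f s) c = nth y s a,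
    nth y (filter f s) c.+1 = nth y s b & forall m, a < m < b -> ~~ f (nth y s m)].
Proof.
move=> hc; have [a ha [fa -> ca]] := nth_filter_count y (ltnW hc).
have [b hb [_ -> cb]] := nth_filter_count y hc.
have count_S m : m < size s -> count f (take m.+1 s) = count f (take m s) + f (nth y s m).
  by move=> hm; rewrite (take_nth y hm) -cats1 count_cat /= addn0.
have lt_ab : a < b.
  by rewrite ltnNge; apply/negP => /(count_take_le f s); rewrite ca cb; lia.
exists a, b; split=> //; first lia.
move=> m /andP[am mb]; apply/negP => fm.
have := count_take_le f s am; have := count_take_le f s mb.
rewrite !count_S ?fa ?fm ?ca ?cb; lia.
Qed.

Definition seg (T : Type) (s : seq T) i j := take (j - i) (drop i s).

Section Segments.
Variables (T : Type) (y : T) (s : seq T).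

Lemma seg_cat i j l : i <= j <= l -> seg s i j ++ seg s j l = seg s i l.
Proof.
move=> hijl; rewrite /seg (_ : l - i = (j - i) + (l - j)); last lia.
by rewrite takeD drop_drop subnK //; lia.
Qed.

Lemma seg_full i : seg s i (size s) = drop i s.
Proof. by rewrite /seg take_oversize // size_drop. Qed.

Lemma seg_nth i j m : m < j - i -> nth y (seg s i j) m = nth y s (i + m).
Proof. by move=> hm; rewrite nth_take // nth_drop. Qed.

Lemma size_seg i j : j <= size s -> size (seg s i j) = j - i.
Proof. by move=> hj; rewrite size_takel // size_drop; lia. Qed.

Lemma seg1 m : m < size s -> seg s m m.+1 = [:: nth y s m].
Proof. by move=> hm; rewrite /seg subSnn (drop_nth y hm) /= take0. Qed.

Lemma seg_cons i j : i < j <= size s -> seg s i j = nth y s i :: seg s i.+1 j.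
Proof. by move=> hij; rewrite -(@seg_cat i i.+1 j) ?seg1 //; lia. Qed.

Lemma last_seg a i j : i < j <= size s -> last a (seg s i j) = nth y s j.-1.
Proof.
move=> hij; rewrite -(@seg_cat i j.-1 j); last lia.
case: j hij => [|j] hij; first lia.
by rewrite seg1 ?last_cat //; lia.
Qed.

Lemma last_rev_seg a i j : i < j <= size s -> last a (rev (seg s i j)) = nth y s i.
Proof. by move=> hij; rewrite seg_cons // rev_cons last_rcons. Qed.

Variable e : rel T.
Hypothesis s_sorted : sorted e s.

Lemma path_seg a i j : i < j <= size s -> e a (nth y s i) -> path e a (seg s i j).
Proof.
move=> hij hai; apply/(pathP y) => m; rewrite size_seg; last lia.
move=> hm; rewrite seg_nth //; case: m hm => [|m] hm /=; first by rewrite addn0.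
by rewrite seg_nth; [rewrite addnS; apply: (sortedP y s_sorted) | ]; lia.
Qed.

Hypothesis e_sym : symmetric e.

Lemma path_rev_seg a i j : i < j <= size s -> e a (nth y s j.-1) ->
  path e a (rev (seg s i j)).
Proof.
move=> hij haj; rewrite -[path _ _ _]/(sorted e (a :: rev _)) -rev_rcons rev_sorted.
rewrite (eq_sorted (e' := e)); last by move=> z1 z2; apply: e_sym.
rewrite seg_cons //= rcons_path; case: (ltngtP i.+1 j) => hj; [|lia|].
- rewrite last_seg; last lia.
  by rewrite e_sym haj andbT; apply: path_seg; [lia | apply: (sortedP y s_sorted); lia].
- by move: haj; rewrite -hj /seg subnn take0 /= e_sym.
Qed.

End Segments.

Lemma card_between (T : finType) (y : T) (s : seq T) a b :
  uniq s -> a < b < size s -> #|between s (nth y s a) (nth y s b)| <= b - a.+1.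
Proof.
move=> s_uniq hab; have s_index m : m < size s -> index (nth y s m) s = m.
  by move=> hm; rewrite index_uniq.
rewrite -[b - a.+1](size_iota a.+1) -(size_map (nth y s)).
apply: (leq_trans _ (card_size _)).
apply/subset_leq_card/subsetP => w; rewrite inE !s_index; try lia.
case/and3P=> ws lt_aw lt_wb; rewrite -(nth_index y ws); apply: map_f.
rewrite mem_iota; lia.
Qed.

Lemma succn_on_nth (T : finType) (y : T) (s : seq T) a j :
  uniq s -> a + j < size s -> succn_on s (nth y s a) j = nth y s (a + j).
Proof.
move=> s_uniq hsj; have ha : a < size s by lia.
by rewrite /succn_on index_uniq // (set_nth_default y).
Qed.

Section LongestPath.
Variables (T : finType) (e : rel T).
Hypothesis e_sym : symmetric e.
Variables (u v x : T) (P : seq T).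
Hypothesis HP : longest_uv_path e u v P.
Hypothesis xNP : x \notin P.

Local Notation n := (size P).
Local Notation p := (nth u P).

Lemma longest_path_uniq : uniq P.
Proof. by case: HP; case: P => // a s /and4P[]. Qed.

Lemma longest_path_sorted : sorted e P.
Proof. by case: HP; case: P => // a s /and4P[]. Qed.

Lemma longest_path_head : p 0 = u.
Proof. by case: HP; case: P => // a s /and4P[/eqP]. Qed.

Lemma longest_path_last : p n.-1 = v.
Proof. by case: HP; case: P => // a s /and4P[_ /eqP <- _ _]; rewrite nth_last. Qed.

Lemma longest_path_adj m : m.+1 < n -> e (p m) (p m.+1).
Proof. exact: (sortedP u longest_path_sorted m). Qed.

Lemma no_tail_reroute m R : 0 < m <= n -> path e (p m.-1) R -> last (p m.-1) R = v ->
  perm_eq R (x :: seg P m n) -> False.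
Proof.
move=> hm hR hRv; rewrite seg_full => hperm.
have def_take : take m P = u :: seg P 1 m.
  by rewrite -longest_path_head -seg_cons /seg ?subn0 ?drop0 //; lia.
have last_take : last u (seg P 1 m) = p m.-1.
  rewrite -[last u _]/(last u (u :: _)) -def_take -nth_last size_takel ?nth_take //; lia.
have Q_perm : perm_eq (u :: seg P 1 m ++ R) (x :: P).
  rewrite -cat_cons -def_take -{2}(cat_take_drop m P) -cat1s.
  by rewrite perm_sym perm_catCA perm_cat2l perm_sym.
have /HP.2 : uv_path e u v (u :: seg P 1 m ++ R).
  apply/and4P; split=> //.
  - by rewrite last_cat last_take hRv.
  - by rewrite (perm_uniq Q_perm) /= xNP longest_path_uniq.
  rewrite cat_path last_take hR andbT -[path _ _ _]/(sorted e (u :: _)) -def_take.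
  exact/take_sorted/longest_path_sorted.
by rewrite (perm_size Q_perm) /=; lia.
Qed.

Local Ltac solve_reroute :=
  repeat progress rewrite /= ?cat_path ?last_cat /= ?(last_rev_seg u) ?(last_seg u)
    ?(path_rev_seg (y := u) longest_path_sorted e_sym)
    ?(path_seg (y := u) longest_path_sorted) ?longest_path_last ?andbT;
  try lia; by rewrite // e_sym.

Local Ltac perm_by_count :=
  apply/permP => f; rewrite /= ?count_cat /= ?count_cat ?count_rev; lia.

Definition succ_nb m := [&& 0 < m, m < n & e x (p m.-1)].

Lemma succ_nb_nonadj_x m : succ_nb m -> ~~ e x (p m).
Proof.
case/and3P=> hm0 hmn h1; apply/negP => h2.
by apply: (no_tail_reroute (m := m) (R := x :: seg P m n));
  [lia | solve_reroute | solve_reroute |].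
Qed.

Lemma succ_nb_nonadj m1 m2 : succ_nb m1 -> succ_nb m2 -> m1 < m2 -> ~~ e (p m1) (p m2).
Proof.
case/and3P=> ? ? h1 /and3P[? ? h2] lt12; apply/negP => h12.
apply: (no_tail_reroute (m := m1) (R := x :: rev (seg P m1 m2) ++ seg P m2 n));
  [lia | solve_reroute | solve_reroute |].
by rewrite -(@seg_cat _ _ m1 m2 n); [perm_by_count | lia].
Qed.

Lemma reroute_before m1 m2 a : 0 < m1 < m2 -> m2 <= a -> a.+1 < n ->
  e x (p m1.-1) -> e x (p m2.-1) -> e (p m1) (p a) -> ~~ e (p m2) (p a.+1).
Proof.
move=> hm h2 ha h1 h2x h3; apply/negP => h4.
apply: (no_tail_reroute (m := m1)
  (R := x :: rev (seg P m1 m2) ++ rev (seg P m2 a.+1) ++ seg P a.+1 n));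
  [lia | solve_reroute | solve_reroute |].
rewrite -(@seg_cat _ _ m1 m2 n) -?(@seg_cat _ _ m2 a.+1 n); try lia; perm_by_count.
Qed.

Lemma reroute_after m1 m2 a : a.+1 < m1 < m2 -> m2 < n ->
  e x (p m1.-1) -> e x (p m2.-1) -> e (p a) (p m1) -> ~~ e (p m2) (p a.+1).
Proof.
move=> hm h2 h1 h2x h3; apply/negP => h4.
apply: (no_tail_reroute (m := a.+1)
  (R := seg P m1 m2 ++ x :: rev (seg P a.+1 m1) ++ seg P m2 n));
  [lia | solve_reroute | solve_reroute |].
rewrite -(@seg_cat _ _ a.+1 m1 n) -?(@seg_cat _ _ m1 m2 n); try lia; perm_by_count.
Qed.

Lemma reroute_across m1 m2 a : 0 < m1 <= a -> a.+1 < m2 < n ->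
  e x (p m1.-1) -> e x (p m2.-1) -> e (p a.+1) (p m1) -> ~~ e (p a) (p m2).
Proof.
move=> hm h2 h1 h2x h3; apply/negP => h4.
apply: (no_tail_reroute (m := m1)
  (R := x :: rev (seg P a.+1 m2) ++ seg P m1 a.+1 ++ seg P m2 n));
  [lia | solve_reroute | solve_reroute |].
rewrite -(@seg_cat _ _ m1 a.+1 n) -?(@seg_cat _ _ a.+1 m2 n); try lia; perm_by_count.
Qed.

Lemma mem_plus_set z : z \in plus_set P v (NP e P x) -> exists2 m, succ_nb m & z = p m.
Proof.
case/imsetP=> w; rewrite mem_filter /NP mem_filter => /and3P[wNv xw wP] ->.
have lt_w : index w P < n by rewrite index_mem.
have lt_w1 : (index w P).+1 < n.
  rewrite ltn_neqAle lt_w andbT; apply: contra wNv => /eqP def_n.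
  by rewrite -(nth_index u wP) -longest_path_last -def_n.
exists (index w P).+1; first by rewrite /succ_nb lt_w1 /= nth_index.
by rewrite /succn_on addn1 (set_nth_default u).
Qed.

Lemma no_two_common_succ_nb s t a m1 m2 : s < a -> a.+1 < t -> t < n ->
  (forall m, s < m < t -> ~~ e x (p m)) -> succ_nb m1 -> succ_nb m2 -> m1 < m2 ->
  e (p a) (p m1) -> e (p a) (p m2) -> e (p a.+1) (p m1) -> e (p a.+1) (p m2) -> False.
Proof.
move=> hsa hat htn gap /and3P[hm1 hm1n h1] /and3P[hm2 hm2n h2] h12 e1 e2 e3 e4.
have out_gap m : e x (p m) -> (m <= s) || (t <= m).
  by apply: contraTT; rewrite negb_or -!ltnNge; apply: gap.
have /orP[lt1|lt1] := out_gap _ h1; have /orP[lt2|lt2] := out_gap _ h2.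
- by apply: (negP (reroute_before (a := a) _ _ _ h1 h2 _)); rewrite // 1?e_sym //; lia.
- by apply: (negP (reroute_across (a := a) _ _ h1 h2 _)); rewrite // 1?e_sym //; lia.
- lia.
- by apply: (negP (reroute_after (a := a) _ _ h1 h2 _)); rewrite // 1?e_sym //; lia.
Qed.

Hypothesis e_irr : irreflexive e.
Variables (k : nat) (X : {set T}) (s t : nat).
Hypothesis X_succ_nb : forall z, z \in X -> exists2 m, succ_nb m & z = p m.

Local Notation Y := (x |: X).

Lemma X_sub_P z : z \in X -> z \in P.
Proof. by case/X_succ_nb=> m /and3P[_ ? _] ->; rewrite mem_nth. Qed.

Lemma X_indep : {in X &, forall y z, ~~ e y z}.
Proof.
move=> _ _ /X_succ_nb[m1 h1 ->] /X_succ_nb[m2 h2 ->].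
case: (ltngtP m1 m2) => [lt12|lt21|->]; last by rewrite e_irr.
  exact: succ_nb_nonadj.
by rewrite e_sym; apply: succ_nb_nonadj.
Qed.

Lemma X_nonadj_x z : z \in X -> ~~ e x z.
Proof. by case/X_succ_nb=> m /succ_nb_nonadj_x ? ->. Qed.

Lemma x_notin_X : x \notin X.
Proof. by apply: contra xNP => /X_sub_P. Qed.

Lemma Y_indep : {in Y &, forall y z, ~~ e y z}.
Proof.
move=> y z /setU1P[->|yX] /setU1P[->|zX].
- by rewrite e_irr.
- exact: X_nonadj_x.
- by rewrite e_sym X_nonadj_x.
- exact: X_indep.
Qed.

Hypothesis lt_tn : t < n.
Hypothesis gap : forall m, s < m < t -> ~~ e x (p m).

Lemma gap_notin_Y m : s.+1 < m < t -> p m \notin Y.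
Proof.
move=> hm; have lt_mn : m < n by apply: ltn_trans lt_tn; lia.
apply/setU1P => -[pm_x | /X_succ_nb[m' /and3P[_ hm' xm'] /eqP]].
  by move: xNP; rewrite -pm_x mem_nth.
rewrite nth_uniq ?longest_path_uniq // => /eqP def_m'.
by apply/negP: xm'; rewrite -def_m'; apply: gap; lia.
Qed.

Hypothesis Hfree : P2_kP1_free e k.
Hypothesis X_card : #|X|.+1 = 2 * k.

Lemma many_X_nbs a m : e a (p m) -> s.+1 < m < t ->
  {in Y, forall y, y != a -> ~~ e a y} -> k < #|NP_in e P (p m) X|.
Proof.
move=> am hm aY.
have := P2_kP1_free_nonnbs e_sym Hfree Y_indep am (gap_notin_Y hm) aY.
have -> : NP_in e P (p m) X = Y :&: [set y | e (p m) y].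
  apply/setP => y; rewrite !inE; case: (y =P x) => [->|_] /=.
    by rewrite (negPf x_notin_X) e_sym (negPf (gap _)) //; lia.
  by case yX: (y \in X) => //=; rewrite X_sub_P.
have := cardsID [set y | e (p m) y] Y; rewrite cardsU1 x_notin_X; lia.
Qed.

Lemma even_step a : s < a -> a.+1 < t -> NP_in e P (p a) X = set0 ->
  k < #|NP_in e P (p a.+1) X|.
Proof.
move=> sa at0 no_nbs; apply: (many_X_nbs (a := p a)); [apply: longest_path_adj; lia | lia |].
move=> y /setU1P[-> _ | yX _]; first by rewrite e_sym; apply: gap; lia.
apply: contraT; rewrite negbK => ay.
have : y \in NP_in e P (p a) X by rewrite inE yX ay X_sub_P.
by rewrite no_nbs inE.
Qed.

Lemma odd_step a : s < a -> a.+1 < t -> k < #|NP_in e P (p a) X| ->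
  NP_in e P (p a.+1) X = set0.
Proof.
move=> sa at0 many_a; apply/setP => z; rewrite in_set0; apply/negbTE/negP => zNa1.
have many_a1 : k < #|NP_in e P (p a.+1) X|.
  move: zNa1; rewrite inE => /and3P[zX _ a1z].
  apply: (many_X_nbs (a := z)); [by rewrite e_sym | lia |].
  by move=> y /setU1P[-> _ | yX _]; [rewrite e_sym X_nonadj_x | apply: X_indep].
have sub_X b : NP_in e P b X \subset X by apply/subsetP => y; rewrite inE => /andP[].
have /card_gt1P[z1 [z2 [z1_nbs z2_nbs z12]]] :
    1 < #|NP_in e P (p a) X :&: NP_in e P (p a.+1) X|.
  by apply: (leq_card_setI (sub_X _) (sub_X _)); move: X_card; lia.
move: z1_nbs z2_nbs; rewrite !inE => /andP[/and3P[z1X _ e1] /and3P[_ _ e3]].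
move=> /andP[/and3P[z2X _ e2] /and3P[_ _ e4]].
case/X_succ_nb: z1X e1 e3 z12 => m1 hm1 ->.
case/X_succ_nb: z2X e2 e4 => m2 hm2 -> e2 e4 e1 e3 z12.
case: (ltngtP m1 m2) => [lt12|lt21|eq12]; last by rewrite eq12 eqxx in z12.
  exact: (no_two_common_succ_nb sa at0 lt_tn gap hm1 hm2 lt12 e1 e2 e3 e4).
exact: (no_two_common_succ_nb sa at0 lt_tn gap hm2 hm1 lt21 e2 e1 e4 e3).
Qed.

Lemma NP_in_alternates j : p s.+1 \in X -> 0 < j -> s + j < t ->
  (odd j -> NP_in e P (p (s + j)) X = set0) /\
  (~~ odd j -> k < #|NP_in e P (p (s + j)) X|).
Proof.
move=> X_first; elim: j => [//|[|j] IH] _ hj.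
  split=> // _; apply/setP => z; rewrite addn1 !inE.
  by case zX: (z \in X); rewrite //= (negPf (X_indep X_first zX)) andbF.
have [|IH_odd IH_even] := IH isT; first lia.
rewrite addnS; split=> [odd_j | even_j].
  apply: odd_step; [lia | lia | apply: IH_even].
  by move: odd_j; rewrite /= !negbK.
apply: even_step; [lia | lia | apply: IH_odd].
by move: even_j; rewrite /= !negbK.
Qed.

End LongestPath.

Theorem mainTheorem5 (T : finType) (e : rel T)
  (e_sym : symmetric e) (e_irr : irreflexive e)
  (k : nat) (k_pos : 0 < k)
  (Hconn : n_connected e (2 * k))
  (Hfree : P2_kP1_free e k)
  (u v : T) (huv : u != v)
  (P : seq T) (HP : longest_uv_path e u v P)
  (HPspan : exists y : T, y \notin P)
  (x : T) (hx : x \notin P)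
  (i : nat) (hi1 : 1 <= i) (hi2 : i <= (size (NP e P x)).-1)
  (X : {set T})
  (hXsub : X \subset plus_set P v (NP e P x))
  (hXi : succn_on P (nth x (NP e P x) i.-1) 1 \in X)
  (hXcard : #|X| = 2 * k - 1) :
  let xi := nth x (NP e P x) i.-1 in
  let xi1 := nth x (NP e P x) i in
  forall j : nat, 1 <= j <= #|between P xi xi1| ->
    (odd j -> NP_in e P (succn_on P xi j) X = set0) /\
    (~~ odd j -> k + 1 <= #|NP_in e P (succn_on P xi j) X|).
Proof.
move=> xi xi1 j /andP[j_pos j_le].
have [|s [t [st_n xi_s xi1_t gap]]] := @nth_filter_gap _ (fun y => e x y) P u i.-1.
  by move: hi2; rewrite /NP; lia.
rewrite prednK // in xi1_t.
have lt_tn : t < size P by case/andP: st_n.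
have /andP[lt_i1 lt_i] : (i.-1 < size (NP e P x)) && (i < size (NP e P x)) by lia.
rewrite /xi /xi1 !(set_nth_default u) // xi_s xi1_t in hXi j_le *.
have lt_sjt : s + j < t by have := card_between u (longest_path_uniq HP) st_n; lia.
rewrite !succn_on_nth ?(longest_path_uniq HP) ?addn1 // in hXi *; try lia.
have X_succ_nb z : z \in X -> exists2 m, succ_nb e u x P m & z = nth u P m.
  by move/(subsetP hXsub); apply: mem_plus_set.
apply: (NP_in_alternates e_sym HP hx e_irr X_succ_nb lt_tn gap Hfree _ hXi j_pos lt_sjt).
by rewrite hXcard; lia.
Qed.
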